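(* Let $G=(V,E)$ be an event graph. Then $\mathrm{dec}(G)$ has exactly one sink component; in particular, the sink component $\mathcal C$ that is the only sink component reachable from every node $(v,\emptyset)$, $v\in V$, is the only sink component of $\mathrm{dec}(G)$, and it is reachable from every node of $\mathrm{dec}(G)$.
   Context: An event graph is a finite, connected, undirected graph $G=(V,E)$, with $n=|V|$, in which every node $v$ carries a label that is either $\mathtt{i}x_v$ (insertion of $x_v$) or $\mathtt{d}x_v$ (deletion of $x_v$), where $x_v$ is an element of a finite universe $\mathcal U$. Write $\mathcal U_{|V}=\{x_v : v\in V\}$. It is assumed that for each $x\in\mathcal U_{|V}$ at least one node is labeled $\mathtt{i}x$ and at least one node is labeled $\mathtt{d}x$. The decorated graph $\mathrm{dec}(G)$ is the directed graph with vertex set $V\times 2^{\mathcal U_{|V}}$ in which $((u,X),(v,Y))$ is an edge if and only if $\{u,v\}\in E$ and $Y=X\cup\{x_v\}$ when $v$ is labeled $\mathtt{i}x_v$, respectively $Y=X\setminus\{x_v\}$ when $v$ is labeled $\mathtt{d}x_v$. A sink component of $\mathrm{dec}(G)$ is a strongly connected component of $\mathrm{dec}(G)$ from which no edge leads to a different strongly connected component. *)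

From mathcomp Require Import all_boot.
Set Implicit Arguments. Unset Strict Implicit. Unset Printing Implicit Defensive.

Section EventGraph.
Variables (V U : finType).
(* e : adjacency relation of the undirected graph G on V;
   ins v = true  <-> v is labeled  i x_v,  ins v = false <-> v is labeled d x_v. *)
Variables (e : rel V) (ins : V -> bool) (x : V -> U).

Definition event_graph : Prop :=
  [/\ 0 < #|V|,
      symmetric e,
      irreflexive e,
      (forall u v, connect e u v) &
      (forall v, (exists u, x u = x v /\ ins u) /\ (exists w, x w = x v /\ ~~ ins w))].

Definition UV : {set U} := [set x v | v : V].

Definition dnode (p : V * {set U}) : bool := p.2 \subset UV.

Definition dedge : rel (V * {set U}) := fun p q =>
  [&& dnode p, dnode q, e p.1 q.1 &
      q.2 == (if ins q.1 then x q.1 |: p.2 else p.2 :\ x q.1)].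

Definition scc (C : {set V * {set U}}) : Prop :=
  [/\ C != set0,
      {subset C <= dnode},
      (forall p q, p \in C -> q \in C -> connect dedge p q) &
      (forall p q, p \in C -> dnode q -> connect dedge p q -> connect dedge q p ->
         q \in C)].

Definition sink_component (C : {set V * {set U}}) : Prop :=
  scc C /\ (forall p q, p \in C -> dedge p q -> q \in C).

End EventGraph.

From mathcomp Require Import all_boot.
Set Implicit Arguments. Unset Strict Implicit. Unset Printing Implicit Defensive.

(* Fix a vertex v0 and a closed walk s from v0 through every
   vertex of G (it exists since G is connected and v0 has a neighbour).
   Walking along s from a node (v0, X) of dec(G) applies the label updates of
   s to X in order; every element x_v of U_|V is updated by the last visit of
   s to a vertex labelled by x_v, so the resulting set does not depend on X.
   Hence the node z = (v0, result of s from the empty set) is reachable from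
   every node of dec(G): first walk to v0, then along s.  A node reachable
   from everything determines the sink structure: its forward closure is a
   sink component, and every sink component, being closed under edges, contains
   z and therefore equals this closure. *)

Section Decoration.
Variables (V U : finType) (e : rel V) (ins : V -> bool) (x : V -> U).
Local Notation step := (dedge e ins x).

Definition upd (X : {set U}) (v : V) : {set U} :=
  if ins v then x v |: X else X :\ x v.

Definition run (X : {set U}) (s : seq V) : {set U} := foldl upd X s.

Lemma upd_sub (X : {set U}) (v : V) : X \subset UV x -> upd X v \subset UV x.
Proof.
move=> sX; rewrite /upd; case: (ins v).
  by rewrite subUset sub1set sX andbT; apply/imsetP; exists v.
exact: subset_trans (subD1set _ _) sX.
Qed.

Lemma run_sub (X : {set U}) (s : seq V) : X \subset UV x -> run X s \subset UV x.
Proof. by elim: s X => [|v s IH] X //= sX; apply/IH/upd_sub. Qed.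

Lemma lift_walk (s : seq V) (u : V) (X : {set U}) : path e u s -> X \subset UV x ->
  connect step (u, X) (last u s, run X s).
Proof.
elim: s u X => [|v s IH] u X /=; first by move=> _ _; exact: connect0.
case/andP=> euv ps sX; apply: connect_trans (IH v _ ps (upd_sub v sX)).
by apply: connect1; rewrite /dedge /dnode /= sX upd_sub // euv /upd eqxx.
Qed.

Lemma run_mem_indep (X Y : {set U}) (s : seq V) (y : U) : (exists2 v, v \in s & x v = y) ->
  (y \in run X s) = (y \in run Y s).
Proof.
elim/last_ind: s => [|s v IH] [w] //; rewrite /run !foldl_rcons -!/(run _ s).
have [<- _ _|nvy] := eqVneq (x v) y.
  by rewrite /upd; case: (ins v); rewrite ?in_setU1 ?in_setD1 eqxx.
rewrite mem_rcons in_cons => /orP [/eqP -> /eqP|ws xw]; first by rewrite (negbTE nvy).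
by rewrite /upd; case: (ins v); rewrite ?in_setU1 ?in_setD1 (IH _) //; exists w.
Qed.

Lemma run_indep (X Y : {set U}) (s : seq V) : (forall v, v \in s) ->
  X \subset UV x -> Y \subset UV x -> run X s = run Y s.
Proof.
move=> s_all sX sY; apply/setP=> y.
have [/imsetP [v _ ->]|nyU] := boolP (y \in UV x); first by apply: run_mem_indep; exists v.
have outside (Z : {set U}) : Z \subset UV x -> (y \in run Z s) = false.
  by move=> sZ; apply: contraNF nyU; apply/subsetP/run_sub.
by rewrite !outside.
Qed.

Lemma reach_covering_state (v0 : V) (s : seq V) :
  (forall u v, connect e u v) -> path e v0 s -> last v0 s = v0 ->
  (forall v, v \in s) ->
  forall p, dnode x p -> connect step p (v0, run set0 s).
Proof.
move=> conn ps ls s_all [u X] sX; case/connectP: (conn u v0) => r pr lr.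
have X_r := run_sub r sX; apply: connect_trans (lift_walk pr sX) _.
by have := lift_walk ps X_r; rewrite -lr ls (run_indep s_all X_r (sub0set _)).
Qed.

End Decoration.

Section ClosedWalks.
Variables (V : finType) (e : rel V).
Hypothesis e_conn : forall u v, connect e u v.

Lemma neighbour_of_other (v b : V) : b != v -> exists w, e v w.
Proof.
move=> bv; case/connectP: (e_conn v b) => [[|w p]] /=.
  by move=> _ /eqP; rewrite (negbTE bv).
by case/andP=> evw _ _; exists w.
Qed.

Variables (v0 w0 : V).
Hypothesis e_v0w0 : e v0 w0.

(* A closed walk from v0 through a given vertex a: v0 -> w0 -> a -> v0. *)
Lemma closed_walk_through (a : V) : exists t, [/\ path e v0 t, last v0 t = v0 & a \in t].
Proof.
case/connectP: (e_conn w0 a) => p1 pp1 la; case/connectP: (e_conn a v0) => p2 pp2 lb.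
exists (w0 :: p1 ++ p2); rewrite /= e_v0w0 cat_path pp1 -la pp2 last_cat -la -lb.
by split=> //; rewrite -cat_cons mem_cat la mem_last.
Qed.

Lemma closed_walk_covering (l : seq V) :
  exists t, [/\ path e v0 t, last v0 t = v0 & {subset l <= t}].
Proof.
elim: l => [|a l [t [pt lt st]]]; first by exists [::].
have [t2 [pt2 lt2 at2]] := closed_walk_through a.
exists (t ++ t2); rewrite cat_path last_cat lt pt pt2; split=> // b.
by rewrite in_cons mem_cat => /orP [/eqP ->|/st ->]; rewrite ?at2 ?orbT.
Qed.

End ClosedWalks.

(* In an event graph every vertex has a neighbour: the nodes labelled i x_v
   and d x_v are distinct, so one of them differs from v. *)
Lemma event_graph_neighbour (V U : finType) (e : rel V) (ins : V -> bool) (x : V -> U) v :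
  event_graph e ins x -> exists w, e v w.
Proof.
case=> _ _ _ conn lab; have [[u [_ iu]] [w [_ iw]]] := lab v.
have [uv|uv] := eqVneq u v; last exact: neighbour_of_other conn _ _ uv.
apply: (neighbour_of_other conn (b := w)); apply: contraNneq iw => ->.
by rewrite -uv.
Qed.

Lemma closed_connect (T : finType) (r : rel T) (C : {set T}) (p q : T) :
  (forall p q, p \in C -> r p q -> q \in C) -> p \in C -> connect r p q -> q \in C.
Proof.
move=> cl pC /connectP [s ps ->]; elim: s p pC ps => [|v s IH] p pC //=.
by case/andP=> rpv ps; apply: IH ps; apply: cl rpv.
Qed.

Section SinkComponent.
Variables (V U : finType) (e : rel V) (ins : V -> bool) (x : V -> U).
Local Notation step := (dedge e ins x).

Lemma connect_dnode (p q : V * {set U}) : dnode x p -> connect step p q -> dnode x q.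
Proof.
move=> pn /connectP [s ps ->]; elim: s p pn ps => [|r s IH] p pn //=.
by case/andP=> /and4P [_ rn _ _] ps; apply: IH.
Qed.

Variable z : V * {set U}.
Hypothesis z_node : dnode x z.
Hypothesis z_root : forall p, dnode x p -> connect step p z.

Definition forward : {set V * {set U}} := [set q | connect step z q].

(* It is a sink component: strongly connected since everything reaches z. *)
Lemma forward_sink : sink_component e ins x forward.
Proof.
split=> [|p q]; last by rewrite !inE => zp pq; apply: connect_trans zp (connect1 pq).
split=> [|q|p q|p q].
- by apply/set0Pn; exists z; rewrite inE connect0.
- by rewrite inE; apply: connect_dnode.
- rewrite !inE => zp zq; apply: connect_trans zq.
  exact/z_root/(connect_dnode z_node zp).
- by rewrite !inE => zp _ pq _; apply: connect_trans pq.
Qed.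

(* Any sink component contains z, being closed under steps, hence equals it. *)
Lemma sink_forward (C : {set V * {set U}}) : sink_component e ins x C -> C = forward.
Proof.
case=> [[/set0Pn [p pC] Cn Cc _] Cs].
have zC : z \in C by apply: closed_connect Cs pC (z_root (Cn _ pC)).
apply/setP=> q; rewrite inE; apply/idP/idP; first exact: Cc.
exact: closed_connect Cs zC.
Qed.

End SinkComponent.

Theorem mainTheorem4 (V U : finType) (e : rel V) (ins : V -> bool) (x : V -> U) :
  event_graph e ins x ->
  exists C : {set V * {set U}},
    [/\ sink_component e ins x C,
        (forall C', sink_component e ins x C' -> C' = C) &
        (forall p, dnode x p -> exists2 q, q \in C & connect (dedge e ins x) p q)].
Proof.
move=> eg; have [/card_gt0P [v0 _] _ _ conn _] := eg.
have [w0 e_v0w0] := event_graph_neighbour v0 eg.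
have [s [ps ls s_all]] := closed_walk_covering conn e_v0w0 (enum V).
have {}s_all v : v \in s by apply: s_all; rewrite mem_enum.
pose z := (v0, run ins x set0 s).
have z_node : dnode x z by apply/run_sub/sub0set.
have z_root := reach_covering_state ins (x := x) conn ps ls s_all.
exists (forward e ins x z); split.
- exact: forward_sink.
- exact: sink_forward.
- by move=> p pn; exists z; [rewrite inE connect0 | apply: z_root].
Qed.
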